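(* Let $A$ satisfy the spectral assumption, let $P_1=Q_1\in\mathbb{R}^{n\times k}$ have orthonormal columns spanning $E_{\mathrm u}$, and suppose $E_{\mathrm u}^\perp$ and $E_{\mathrm s}$ are $\xi$-close for some $\xi\in(0,1)$. Then one can choose $P_2\in\mathbb{R}^{n\times(n-k)}$ with orthonormal columns spanning $E_{\mathrm u}^\perp$ and $Q_2\in\mathbb{R}^{n\times(n-k)}$ with orthonormal columns spanning $E_{\mathrm s}$ such that, with the notation below, (1) $\sigma_{\min}(P_2^\top Q_2)\ge 1-\xi$, $\|P_1^\top Q_2\|\le\sqrt{2\xi}$, $\|P_2-Q_2\|\le\sqrt{2\xi}$; (2) $\|R_2\|\le\frac{1}{1-\xi}$ and $\|N_2\|\le\frac{1}{1-\xi}\|A\|$; (3) $\|P_1^\top-R_1\|\le\frac{\sqrt{2\xi}}{1-\xi}$ and $\|R_1\|\le 1+\frac{\sqrt{2\xi}}{1-\xi}$; (4) $\|\Delta\|\le\frac{2-\xi}{1-\xi}\sqrt{2\xi}\,\|A\|$.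
   Context: Spectral assumption: $A\in\mathbb{R}^{n\times n}$ is diagonalizable with eigenvalues $|\lambda_1|>|\lambda_2|\ge\cdots\ge|\lambda_k|>1>|\lambda_{k+1}|\ge\cdots\ge|\lambda_n|$. $E_{\mathrm u}$ (resp. $E_{\mathrm s}$) is the real $A$-invariant subspace spanned by the real eigenvectors and the real and imaginary parts of complex eigenvectors associated with $\lambda_1,\dots,\lambda_k$ (resp. $\lambda_{k+1},\dots,\lambda_n$); $\mathbb{R}^n=E_{\mathrm u}\oplus E_{\mathrm s}$. Given orthonormal-column matrices $P_1$ (basis of $E_{\mathrm u}$), $P_2$ (basis of $E_{\mathrm u}^\perp$), $P=[P_1\ P_2]$, define $M=P^\top AP=\begin{bmatrix}M_1&\Delta\\0&M_2\end{bmatrix}$. With $Q_1=P_1$, $Q_2$ an orthonormal basis of $E_{\mathrm s}$, $Q=[Q_1\ Q_2]$, write $Q^{-1}=\begin{bmatrix}R_1\\R_2\end{bmatrix}$ ($R_1\in\mathbb{R}^{k\times n}$), so that $Q^{-1}AQ=\mathrm{diag}(N_1,N_2)$ with $N_1=M_1$. Definition ($\xi$-close): for $\xi\in(0,1]$, $E_{\mathrm u}^\perp=\mathrm{col}(P_2)$ and $E_{\mathrm s}=\mathrm{col}(Q_2)$ are $\xi$-close iff $\sigma_{\min}(P_2^\top Q_2)>1-\xi$ (independent of the choice of orthonormal bases). $\|\cdot\|$ is the spectral norm. *)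

From HB Require Import structures.
From mathcomp Require Import all_boot all_order all_algebra.
From mathcomp Require Import all_classical all_reals.
From mathcomp Require Import complex.

Set Implicit Arguments.
Unset Strict Implicit.
Unset Printing Implicit Defensive.
Import Order.TTheory GRing.Theory Num.Theory.
Local Open Scope ring_scope.
Local Open Scope classical_set_scope.

Section Defs.
Variable R : realType.

Notation C := (complex.complex R).

Definition cmod (z : C) : R :=
  Num.sqrt (complex.Re z ^+ 2 + complex.Im z ^+ 2).

Definition cplx_mx p q (A : 'M[R]_(p, q)) : 'M[C]_(p, q) :=
  map_mx (fun r => complex.Complex r 0) A.
Definition Re_mx p q (V : 'M[C]_(p, q)) : 'M[R]_(p, q) := map_mx (@complex.Re R) V.
Definition Im_mx p q (V : 'M[C]_(p, q)) : 'M[R]_(p, q) := map_mx (@complex.Im R) V.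

Definition vnorm n (x : 'cV[R]_n) : R := Num.sqrt (\sum_i x i 0 ^+ 2).

Definition opnorm p q (B : 'M[R]_(p, q)) : R :=
  sup [set vnorm (B *m x) | x in [set x : 'cV[R]_q | vnorm x = 1]].

Definition sigma_min p (B : 'M[R]_p) : R :=
  inf [set vnorm (B *m x) | x in [set x : 'cV[R]_p | vnorm x = 1]].

Definition orthonormal_cols p q (P : 'M[R]_(p, q)) : Prop := P^T *m P = 1%:M.

Definition in_span n (S : set 'cV[R]_n) (x : 'cV[R]_n) : Prop :=
  exists (s : seq 'cV[R]_n) (c : seq R),
    (forall v, v \in s -> S v) /\ x = \sum_(i < size s) c`_i *: s`_i.

Definition col_spans n q (P : 'M[R]_(n, q)) (E : set 'cV[R]_n) : Prop :=
  forall x : 'cV[R]_n, (exists y : 'cV[R]_q, x = P *m y) <-> E x.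

Definition orth_compl n (E : set 'cV[R]_n) : set 'cV[R]_n :=
  [set x | forall y, E y -> y^T *m x = 0].

Definition eig_real_span n (A : 'M[R]_n) (lam : 'I_n -> C) (I : pred 'I_n)
  : set 'cV[R]_n :=
  in_span [set w | exists (i : 'I_n) (v : 'cV[C]_n),
             [/\ I i, v != 0, cplx_mx A *m v = lam i *: v
               & (w = Re_mx v \/ w = Im_mx v)]].

(* spectral assumption: A diagonalizable (over C) with eigenvalues lam 0, ...,
   lam (n-1) (with multiplicity), ordered as
   |l_1| > |l_2| >= ... >= |l_k| > 1 > |l_{k+1}| >= ... >= |l_n| *)
Definition spectral_assumption n (k : nat) (A : 'M[R]_n) (lam : 'I_n -> C) : Prop :=
  (exists V : 'M[C]_n, V \in unitmx /\
      invmx V *m cplx_mx A *m V = diag_mx (\row_i lam i)) /\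
  (forall i j : 'I_n, (i < j)%N -> cmod (lam j) <= cmod (lam i)) /\
  (forall i j : 'I_n, nat_of_ord i = 0%N -> nat_of_ord j = 1%N ->
      cmod (lam j) < cmod (lam i)) /\
  (forall i : 'I_n, (i < k)%N -> 1 < cmod (lam i)) /\
  (forall i : 'I_n, (k <= i)%N -> cmod (lam i) < 1).

Definition E_u n k (A : 'M[R]_n) lam := eig_real_span A lam (fun i => (i < k)%N).
Definition E_s n k (A : 'M[R]_n) lam := eig_real_span A lam (fun i => (k <= i)%N).

Definition xi_close n m (xi : R) (U W : set 'cV[R]_n) : Prop :=
  exists (P2 Q2 : 'M[R]_(n, m)),
    [/\ orthonormal_cols P2, col_spans P2 U, orthonormal_cols Q2, col_spans Q2 W
      & 1 - xi < sigma_min (P2^T *m Q2)].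

End Defs.

(* If sigma_min (P2^T Q2) > 1 - xi, the polar decomposition P2^T Q2 = U H
   rotates P2 into P2 U for which H = P2^T Q2 satisfies
   y^T H y >= (1 - xi) |y|^2.  For such aligned bases every estimate is
   elementary: |(P2 - Q2) y|^2 = 2 |y|^2 - 2 y^T H y and
   |P1^T Q2 y|^2 = |y|^2 - |H y|^2 are at most 2 xi |y|^2, the identity
   P2^T Q2 R2 = P2^T bounds R2, P1^T - R1 = P1^T Q2 R2, and the A-invariance
   of E_s gives A Q2 = Q2 N2, whence Delta = P1^T Q2 N2 + P1^T A (P2 - Q2).
   The polar decomposition comes from the real spectral theorem for S^T S,
   proved by induction on the dimension with Householder reflections. *)

From HB Require Import structures.
From mathcomp Require Import all_boot all_order all_algebra.
From mathcomp Require Import all_classical all_reals.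
From mathcomp Require Import complex.
From mathcomp Require Import ring lra.
Set Implicit Arguments.
Unset Strict Implicit.
Unset Printing Implicit Defensive.
Import Order.TTheory GRing.Theory Num.Theory.
Local Open Scope ring_scope.

Section EuclideanNorm.
Variable R : realType.

Definition vdot n (u v : 'cV[R]_n) : R := (u^T *m v) 0 0.

Lemma vdotE n (u v : 'cV[R]_n) : vdot u v = \sum_i u i 0 * v i 0.
Proof. by rewrite /vdot mxE; apply: eq_bigr => i _; rewrite mxE. Qed.

Lemma vdotC n (u v : 'cV[R]_n) : vdot u v = vdot v u.
Proof. by rewrite !vdotE; apply: eq_bigr => i _; rewrite mulrC. Qed.

Lemma vdotDl n (u v w : 'cV[R]_n) : vdot (u + v) w = vdot u w + vdot v w.
Proof. by rewrite /vdot linearD /= mulmxDl mxE. Qed.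

Lemma vdotZl n a (u w : 'cV[R]_n) : vdot (a *: u) w = a * vdot u w.
Proof. by rewrite /vdot linearZ /= -scalemxAl mxE. Qed.

Lemma vdotNl n (u w : 'cV[R]_n) : vdot (- u) w = - vdot u w.
Proof. by rewrite -scaleN1r vdotZl mulN1r. Qed.

Lemma vdotDr n (u v w : 'cV[R]_n) : vdot w (u + v) = vdot w u + vdot w v.
Proof. by rewrite vdotC vdotDl !(vdotC w). Qed.

Lemma vdotZr n a (u w : 'cV[R]_n) : vdot w (a *: u) = a * vdot w u.
Proof. by rewrite vdotC vdotZl vdotC. Qed.

Lemma vdotNr n (u w : 'cV[R]_n) : vdot w (- u) = - vdot w u.
Proof. by rewrite vdotC vdotNl vdotC. Qed.

Lemma vdot_mulmxl p q (B : 'M[R]_(p, q)) x y : vdot (B *m x) y = vdot x (B^T *m y).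
Proof. by rewrite /vdot trmx_mul mulmxA. Qed.

Lemma vdot_ge0 n (x : 'cV[R]_n) : 0 <= vdot x x.
Proof. by rewrite vdotE; apply: sumr_ge0 => i _; rewrite -expr2 sqr_ge0. Qed.

Lemma vdot_eq0 n (x : 'cV[R]_n) : vdot x x = 0 -> x = 0.
Proof.
rewrite vdotE => /eqP; rewrite psumr_eq0 => [/allP x0|i _]; last first.
  by rewrite -expr2 sqr_ge0.
apply/matrixP => i j; rewrite ord1 mxE.
by have := x0 i (mem_index_enum _); rewrite -expr2 sqrf_eq0 => /eqP.
Qed.

Lemma vdot_gt0 n (x : 'cV[R]_n) : x != 0 -> 0 < vdot x x.
Proof.
move=> x0; rewrite lt_def vdot_ge0 andbT.
by apply: contra x0 => /eqP /vdot_eq0 ->.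
Qed.

Lemma vnormE n (x : 'cV[R]_n) : vnorm x = Num.sqrt (vdot x x).
Proof. by rewrite /vnorm vdotE; congr Num.sqrt; apply: eq_bigr => i _; rewrite expr2. Qed.

Lemma vnorm_ge0 n (x : 'cV[R]_n) : 0 <= vnorm x.
Proof. by rewrite vnormE sqrtr_ge0. Qed.

Lemma vnorm_sqr n (x : 'cV[R]_n) : vnorm x ^+ 2 = vdot x x.
Proof. by rewrite vnormE sqr_sqrtr // vdot_ge0. Qed.

Lemma vnorm0 n : vnorm (0 : 'cV[R]_n) = 0.
Proof. by rewrite vnormE /vdot mulmx0 mxE sqrtr0. Qed.

Lemma vnorm_eq0 n (x : 'cV[R]_n) : vnorm x = 0 -> x = 0.
Proof. by move=> x0; apply: vdot_eq0; rewrite -vnorm_sqr x0 expr0n. Qed.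

Lemma vnorm_gt0 n (x : 'cV[R]_n) : x != 0 -> 0 < vnorm x.
Proof. by move=> x_neq0; rewrite vnormE sqrtr_gt0 vdot_gt0. Qed.

Lemma vnormZ n a (x : 'cV[R]_n) : vnorm (a *: x) = `|a| * vnorm x.
Proof. by rewrite !vnormE vdotZl vdotZr mulrA -expr2 sqrtrM ?sqr_ge0 // sqrtr_sqr. Qed.

Lemma vnorm_normalize n (x : 'cV[R]_n) : x != 0 -> vnorm ((vnorm x)^-1 *: x) = 1.
Proof.
move=> x_neq0; rewrite vnormZ ger0_norm ?invr_ge0 ?vnorm_ge0 // mulVf //.
by rewrite gt_eqF // vnorm_gt0.
Qed.

Lemma vdot_CauchySchwarz n (u v : 'cV[R]_n) : vdot u v ^+ 2 <= vdot u u * vdot v v.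
Proof.
have [v0|v_neq0] := eqVneq v 0.
  by rewrite v0 /vdot !mulmx0 mxE expr0n mulr0.
(* Expand |(v.v) u - (u.v) v|^2 >= 0 and divide by v.v > 0. *)
have := vdot_ge0 (vdot v v *: u - vdot u v *: v).
rewrite !(vdotDl, vdotDr, vdotNl, vdotNr, vdotZl, vdotZr) (vdotC v u) => h.
have vv := vdot_gt0 v_neq0.
have : 0 <= vdot v v * (vdot u u * vdot v v - vdot u v ^+ 2) by nra.
by rewrite pmulr_rge0 // subr_ge0.
Qed.

Lemma normr_vdot_le n (u v : 'cV[R]_n) : `|vdot u v| <= vnorm u * vnorm v.
Proof.
rewrite -sqrtr_sqr !vnormE -sqrtrM ?vdot_ge0 // ler_sqrt ?mulr_ge0 ?vdot_ge0 //.
exact: vdot_CauchySchwarz.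
Qed.

Lemma vnormD n (u v : 'cV[R]_n) : vnorm (u + v) <= vnorm u + vnorm v.
Proof.
rewrite -(ger0_norm (addr_ge0 (vnorm_ge0 u) (vnorm_ge0 v))) -sqrtr_sqr.
rewrite [vnorm (u + v)]vnormE ler_sqrt ?sqr_ge0 //.
rewrite vdotDl !vdotDr (vdotC v u) sqrrD !vnorm_sqr.
have := normr_vdot_le u v; have := ler_norm (vdot u v); lra.
Qed.

Lemma vnormB n (u v : 'cV[R]_n) : vnorm (u - v) <= vnorm u + vnorm v.
Proof. by rewrite -[vnorm v]mul1r -normrN1 -vnormZ scaleN1r vnormD. Qed.

Lemma vnorm_orthonormal p q (Q : 'M[R]_(p, q)) x :
  orthonormal_cols Q -> vnorm (Q *m x) = vnorm x.
Proof. by move=> oQ; rewrite !vnormE vdot_mulmxl mulmxA oQ mul1mx. Qed.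

End EuclideanNorm.

Section OperatorBound.
Variable R : realType.
Local Open Scope classical_set_scope.

Definition opbound p q (B : 'M[R]_(p, q)) (c : R) :=
  forall x, vnorm (B *m x) <= c * vnorm x.

Lemma opboundM p q r (B : 'M[R]_(p, q)) (C : 'M[R]_(q, r)) b c :
  0 <= b -> opbound B b -> opbound C c -> opbound (B *m C) (b * c).
Proof.
move=> b0 hB hC x; rewrite -mulmxA; apply: le_trans (hB _) _.
by rewrite -mulrA ler_wpM2l.
Qed.

Lemma opboundD p q (B C : 'M[R]_(p, q)) b c :
  opbound B b -> opbound C c -> opbound (B + C) (b + c).
Proof.
move=> hB hC x; rewrite mulmxDl mulrDl; apply: le_trans (vnormD _ _) _.
exact: lerD.
Qed.

Lemma opboundB p q (B C : 'M[R]_(p, q)) b c :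
  opbound B b -> opbound C c -> opbound (B - C) (b + c).
Proof.
move=> hB hC x; rewrite mulmxBl mulrDl; apply: le_trans (vnormB _ _) _.
exact: lerD.
Qed.

Lemma opbound_trmx p q (B : 'M[R]_(p, q)) c :
  0 <= c -> opbound B c -> opbound B^T c.
Proof.
move=> c0 hB y; have [->|By_neq0] := eqVneq (B^T *m y) 0.
  by rewrite vnorm0 mulr_ge0 ?vnorm_ge0.
(* |B^T y|^2 = (B B^T y).y <= |B B^T y| |y| <= c |B^T y| |y| *)
have : vnorm (B^T *m y) * vnorm (B^T *m y) <= vnorm (B^T *m y) * (c * vnorm y).
  rewrite -expr2 vnorm_sqr -vdot_mulmxl vdotC.
  apply: le_trans (ler_norm _) (le_trans (normr_vdot_le _ _) _).
  by rewrite mulrC mulrA ler_wpM2r ?vnorm_ge0 // mulrC hB.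
by rewrite ler_pM2l // vnorm_gt0.
Qed.

Lemma opbound_orthonormal p q (Q : 'M[R]_(p, q)) : orthonormal_cols Q -> opbound Q 1.
Proof. by move=> oQ x; rewrite vnorm_orthonormal // mul1r. Qed.

Lemma opbound_sqr p q (B : 'M[R]_(p, q)) c : 0 <= c ->
  (forall x, vdot (B *m x) (B *m x) <= c ^+ 2 * vdot x x) -> opbound B c.
Proof.
move=> c0 hB x; rewrite -ler_sqr ?nnegrE ?mulr_ge0 ?vnorm_ge0 //.
by rewrite exprMn !vnorm_sqr.
Qed.

Lemma opbound_exists p q (B : 'M[R]_(p, q)) : exists c, opbound B c.
Proof.
exists (Num.sqrt (\sum_i vdot (row i B)^T (row i B)^T)) => x.
rewrite !vnormE -sqrtrM ?sumr_ge0 // => [|i _]; last exact: vdot_ge0.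
rewrite ler_sqrt ?mulr_ge0 ?vdot_ge0 ?sumr_ge0 // => [|i _]; last exact: vdot_ge0.
rewrite [X in X <= _]vdotE mulr_suml; apply: ler_sum => i _.
have -> : (B *m x) i 0 = vdot (row i B)^T x by rewrite /vdot trmxK -row_mul !mxE.
by rewrite -expr2 vdot_CauchySchwarz.
Qed.

Let unit_image p q (B : 'M[R]_(p, q)) :=
  [set vnorm (B *m x) | x in [set x : 'cV[R]_q | vnorm x = 1]].

Let opnorm_unit_image0 p q (B : 'M[R]_(p, q)) :
  ~ (exists y, unit_image B y) -> opnorm B = 0.
Proof.
move=> no_unit; rewrite /opnorm -/(unit_image B).
suff -> : unit_image B = set0 by rewrite sup0.
by apply/seteqP; split => y // By; apply: no_unit; exists y.
Qed.

Lemma opnorm_le p q (B : 'M[R]_(p, q)) c : 0 <= c -> opbound B c -> opnorm B <= c.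
Proof.
move=> c0 hB; have [[y By]|/opnorm_unit_image0->//] := pselect (exists y, unit_image B y).
apply: ge_sup; first by exists y.
by move=> _ [x /= x1 <-]; apply: le_trans (hB x) _; rewrite x1 mulr1.
Qed.

Let has_ubound_unit_image p q (B : 'M[R]_(p, q)) : has_ubound (unit_image B).
Proof.
have [c hc] := opbound_exists B.
by exists c => _ [x /= x1 <-]; apply: le_trans (hc x) _; rewrite x1 mulr1.
Qed.

Lemma opbound_opnorm p q (B : 'M[R]_(p, q)) : opbound B (opnorm B).
Proof.
move=> x; have [->|x_neq0] := eqVneq x 0; first by rewrite mulmx0 !vnorm0 mulr0.
have : vnorm (B *m ((vnorm x)^-1 *: x)) <= opnorm B.
  apply: (ub_le_sup (has_ubound_unit_image B)).
  by exists ((vnorm x)^-1 *: x); rewrite //= vnorm_normalize.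
rewrite -scalemxAr vnormZ ger0_norm ?invr_ge0 ?vnorm_ge0 //.
by rewrite ler_pdivrMl ?vnorm_gt0 // mulrC.
Qed.

Lemma opnorm_ge0 p q (B : 'M[R]_(p, q)) : 0 <= opnorm B.
Proof.
have [[y By]|/opnorm_unit_image0->//] := pselect (exists y, unit_image B y).
apply: le_trans (ub_le_sup (has_ubound_unit_image B) By).
by case: By => x _ <-; exact: vnorm_ge0.
Qed.

Lemma sigma_min_le p (B : 'M[R]_p) x : sigma_min B * vnorm x <= vnorm (B *m x).
Proof.
have lb : has_lbound (unit_image B) by exists 0 => _ [y _ <-]; apply: vnorm_ge0.
have [->|x_neq0] := eqVneq x 0; first by rewrite mulmx0 !vnorm0 mulr0.
have : sigma_min B <= vnorm (B *m ((vnorm x)^-1 *: x)).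
  by apply: (ge_inf lb); exists ((vnorm x)^-1 *: x); rewrite //= vnorm_normalize.
rewrite -scalemxAr vnormZ ger0_norm ?invr_ge0 ?vnorm_ge0 //.
by rewrite ler_pdivlMl ?vnorm_gt0 // mulrC.
Qed.

Lemma sigma_min_orthonormal_mull p (O B : 'M[R]_p) :
  orthonormal_cols O -> sigma_min (O *m B) = sigma_min B.
Proof.
move=> oO; rewrite /sigma_min; f_equal; apply/seteqP.
by split=> _ [x x1 <-]; exists x; rewrite // -mulmxA (vnorm_orthonormal _ oO).
Qed.

End OperatorBound.

Section RealImaginaryParts.
Variable R : realType.
Notation C := (complex.complex R).

Lemma ReM (l z : C) :
  complex.Re (l * z) = complex.Re l * complex.Re z - complex.Im l * complex.Im z.
Proof. by case: z => a b; case: l. Qed.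

Lemma ImM (l z : C) :
  complex.Im (l * z) = complex.Re l * complex.Im z + complex.Im l * complex.Re z.
Proof. by case: z => a b; case: l => c d /=; rewrite addrC. Qed.

Lemma Re_sum I (r : seq I) (P : pred I) (F : I -> C) :
  complex.Re (\sum_(i <- r | P i) F i) = \sum_(i <- r | P i) complex.Re (F i).
Proof. by elim/big_rec2: _ => // i x y _ <-; case: (F i); case: y. Qed.

Lemma Im_sum I (r : seq I) (P : pred I) (F : I -> C) :
  complex.Im (\sum_(i <- r | P i) F i) = \sum_(i <- r | P i) complex.Im (F i).
Proof. by elim/big_rec2: _ => // i x y _ <-; case: (F i); case: y. Qed.

Lemma Re_mx_cplxM p q (A : 'M[R]_(p, q)) (v : 'cV[C]_q) :
  Re_mx (cplx_mx A *m v) = A *m Re_mx v.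
Proof.
apply/matrixP => i j; rewrite !mxE Re_sum; apply: eq_bigr => l _.
by rewrite !mxE ReM mul0r subr0.
Qed.

Lemma Im_mx_cplxM p q (A : 'M[R]_(p, q)) (v : 'cV[C]_q) :
  Im_mx (cplx_mx A *m v) = A *m Im_mx v.
Proof.
apply/matrixP => i j; rewrite !mxE Im_sum; apply: eq_bigr => l _.
by rewrite !mxE ImM mul0r addr0.
Qed.

Lemma Re_mxZ p q (l : C) (v : 'M[C]_(p, q)) :
  Re_mx (l *: v) = complex.Re l *: Re_mx v - complex.Im l *: Im_mx v.
Proof. by apply/matrixP => i j; rewrite !mxE ReM. Qed.

Lemma Im_mxZ p q (l : C) (v : 'M[C]_(p, q)) :
  Im_mx (l *: v) = complex.Im l *: Re_mx v + complex.Re l *: Im_mx v.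
Proof. by apply/matrixP => i j; rewrite !mxE ImM addrC. Qed.

Lemma Re_Im_mx_neq0 p q (v : 'M[C]_(p, q)) : v != 0 -> Re_mx v != 0 \/ Im_mx v != 0.
Proof.
move=> v_neq0; have [Re0|] := eqVneq (Re_mx v) 0; last by left.
have [Im0|] := eqVneq (Im_mx v) 0; last by right.
case/eqP: v_neq0; apply/matrixP => i j.
move/matrixP: Re0 => /(_ i j); move/matrixP: Im0 => /(_ i j); rewrite !mxE.
by case: (v i j) => a b /= -> ->.
Qed.

End RealImaginaryParts.

Section SymmetricSpectral.
Variable R : realType.

Lemma unit_eigenvector n (G : 'M[R]_n) (x : 'cV[R]_n) l :
  x != 0 -> G *m x = l *: x -> exists u : 'cV[R]_n, vdot u u = 1 /\ G *m u = l *: u.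
Proof.
move=> x_neq0 Gx; exists ((vnorm x)^-1 *: x); split.
  by rewrite -vnorm_sqr vnorm_normalize // expr1n.
by rewrite -scalemxAr Gx !scalerA mulrC.
Qed.

(* A complex eigenvector v of the complexified matrix has a nonzero real or
   imaginary part, and symmetry forces the eigenvalue to be real. *)
Lemma symmetric_real_eigenvector n (G : 'M[R]_n.+1) : G^T = G ->
  exists (u : 'cV[R]_n.+1) (l : R), vdot u u = 1 /\ G *m u = l *: u.
Proof.
move=> sG; have [a /eigenvalueP [v Gv v_neq0]] := eigenvalue_closed (cplx_mx G) (ltn0Sn n).
suff [x x_neq0 /(unit_eigenvector x_neq0) [u [u1 Gu]]] :
    exists2 x : 'cV[R]_n.+1, x != 0 & G *m x = complex.Re a *: x.
  by exists u, (complex.Re a).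
have {}Gv : cplx_mx G *m v^T = a *: v^T.
  by have := congr1 trmx Gv; rewrite trmx_mul linearZ /= /cplx_mx map_trmx sG.
set xr := Re_mx v^T; set xi := Im_mx v^T.
have Gxr : G *m xr = complex.Re a *: xr - complex.Im a *: xi.
  by rewrite -Re_mx_cplxM Gv Re_mxZ.
have Gxi : G *m xi = complex.Im a *: xr + complex.Re a *: xi.
  by rewrite -Im_mx_cplxM Gv Im_mxZ.
have : vdot xi (G *m xr) = vdot (G *m xi) xr by rewrite vdot_mulmxl sG.
rewrite Gxr Gxi vdotDl vdotDr vdotNr !vdotZl !vdotZr (vdotC xi xr) => sym.
have Ima0 x : x != 0 -> x = xr \/ x = xi -> complex.Im a = 0.
  move=> x_neq0 hx; have := vdot_gt0 x_neq0; have := vdot_ge0 xr.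
  have := vdot_ge0 xi; case: hx => -> *; nra.
have vt_neq0 : v^T != 0 by rewrite trmx_eq0.
case: (Re_Im_mx_neq0 vt_neq0) => [xr_neq0|xi_neq0].
  exists xr => //.
  by rewrite Gxr (Ima0 xr xr_neq0 (or_introl erefl)) scale0r subr0.
exists xi => //.
by rewrite Gxi (Ima0 xi xi_neq0 (or_intror erefl)) scale0r add0r.
Qed.

Lemma reflection_mx_sqr n (M : 'M[R]_n) c d :
  M *m M = d *: M -> c * d = 2 -> (1%:M - c *: M) *m (1%:M - c *: M) = 1%:M.
Proof.
move=> MM cd; rewrite mulmxBl !mulmxBr !mul1mx mulmx1 -!scalemxAl -!scalemxAr MM.
by rewrite !scalerA -mulrA cd; apply/matrixP => i j; rewrite !mxE; ring.
Qed.

(* The Householder reflection I - 2 w w^T / (w.w) with w = u - e_0. *)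
Lemma orthogonal_mx_col0 n (u : 'cV[R]_n.+1) : vdot u u = 1 ->
  exists O : 'M[R]_n.+1, orthonormal_cols O /\ O *m delta_mx 0 0 = u.
Proof.
move=> u1; set e : 'cV[R]_n.+1 := delta_mx 0 0.
have [->|u_neq_e] := eqVneq u e.
  by exists 1%:M; rewrite /orthonormal_cols trmx1 !mul1mx.
have vdot_e (x : 'cV[R]_n.+1) : vdot x e = x 0 0.
  rewrite vdotE (bigD1 ord0) //= mxE !eqxx mulr1 big1 ?addr0 // => i i0.
  by rewrite mxE (negbTE i0) mulr0.
have e00 : e 0 0 = 1 by rewrite mxE !eqxx.
set w := u - e.
have ww_gt0 : 0 < vdot w w by apply: vdot_gt0; rewrite subr_eq0.
have we : vdot w e = u 0 0 - 1 by rewrite vdotDl vdotNl !vdot_e e00.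
have ww : vdot w w = 2 - 2 * u 0 0.
  rewrite vdotDl !vdotDr !vdotNl !vdotNr opprK u1 (vdotC e u) !vdot_e e00; lra.
have wwT : w *m w^T *m w = vdot w w *: w.
  by rewrite -mulmxA [w^T *m w]mx11_scalar mul_mx_scalar.
set c := 2 / vdot w w; set O := 1%:M - c *: (w *m w^T).
have sO : O^T = O by rewrite /O linearB /= linearZ /= trmx1 trmx_mul trmxK.
have cww : c * vdot w w = 2 by rewrite /c divfK // gt_eqF.
exists O; split.
  rewrite /orthonormal_cols sO; apply: reflection_mx_sqr cww.
  by rewrite mulmxA wwT -scalemxAl.
rewrite /O mulmxBl mul1mx -scalemxAl -mulmxA [w^T *m e]mx11_scalar -/(vdot w e) we.
rewrite mul_mx_scalar scalerA.
have -> : c * (u 0 0 - 1) = -1.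
  by rewrite /c ww; field; rewrite -ww gt_eqF.
by rewrite scaleN1r opprK addrC subrK.
Qed.

Lemma symmetric_eigen_col0_block n (B : 'M[R]_(1 + n)) l :
  B^T = B -> B *m (delta_mx 0 0 : 'cV[R]_(1 + n)) = l *: delta_mx 0 0 ->
  B = block_mx (ulsubmx B) 0 0 (drsubmx B).
Proof.
move=> sB Be; have Bcol0 i : B i 0 = l * (i == 0)%:R.
  by move/matrixP: Be => /(_ i 0); rewrite -colE !mxE eqxx andbT.
have lshift0 (i : 'I_1) : lshift n i = 0 by apply/val_inj; rewrite /= ord1.
rewrite -{1}(submxK B); congr block_mx; apply/matrixP => i j; rewrite !mxE.
  by rewrite -[B]sB mxE lshift0 Bcol0 mulr0.
by rewrite lshift0 Bcol0 mulr0.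
Qed.

Lemma symmetric_orthogonal_diag n (G : 'M[R]_n) : G^T = G ->
  exists O : 'M[R]_n, orthonormal_cols O /\ is_diag_mx (O^T *m G *m O).
Proof.
elim: n G => [|n IH] G sG.
  exists 1%:M; split; first by rewrite /orthonormal_cols trmx1 mul1mx.
  by apply/is_diag_mxP => -[].
have [u [l [u1 Gu]]] := symmetric_real_eigenvector sG.
have [O1 [oO1 O1e]] := orthogonal_mx_col0 u1.
pose B : 'M[R]_(1 + n) := O1^T *m G *m O1.
have sB : B^T = B by rewrite /B !trmx_mul trmxK sG mulmxA.
have Be : B *m (delta_mx 0 0 : 'cV[R]_n.+1) = l *: delta_mx 0 0.
  by rewrite /B -!mulmxA O1e Gu -scalemxAr -O1e mulmxA oO1 mul1mx.
have Bblock := symmetric_eigen_col0_block sB Be.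
have BE : O1^T *m G *m O1 = B by [].
clearbody B.
have [O' [oO' dO']] : exists O' : 'M[R]_n,
    orthonormal_cols O' /\ is_diag_mx (O'^T *m drsubmx B *m O').
  by apply: IH; rewrite trmx_drsub sB.
pose K : 'M[R]_(1 + n) := block_mx 1%:M 0 0 O'.
have oK : orthonormal_cols K.
  rewrite /orthonormal_cols /K tr_block_mx mulmx_block !trmx0 trmx1 !mulmx0 !mul0mx.
  by rewrite !mul1mx !addr0 !add0r oO' -scalar_mx_block.
exists (O1 *m K); split.
  by rewrite /orthonormal_cols trmx_mul mulmxA -(mulmxA K^T) oO1 mulmx1 oK.
have -> : (O1 *m K)^T *m G *m (O1 *m K) = K^T *m B *m K.
  by rewrite -BE trmx_mul !mulmxA.
rewrite Bblock /K tr_block_mx !mulmx_block !trmx0 trmx1 !mulmx0 !mul0mx !mul1mx.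
rewrite !mulmx1 !addr0 !add0r (mul0mx _ O').
change (@is_diag_mx _ (1 + n) (1 + n) (block_mx (ulsubmx B) 0 0 (O'^T *m drsubmx B *m O'))).
by rewrite is_diag_block_mx // !eqxx mx11_is_diag.
Qed.

End SymmetricSpectral.

Section OrthogonalDiagonal.
Variables (R : realType) (n : nat) (O : 'M[R]_n).
Hypothesis oO : orthonormal_cols O.

Definition orth_diag (a : 'I_n -> R) := O *m diag_mx (\row_j a j) *m O^T.

Lemma eq_orth_diag a b : a =1 b -> orth_diag a = orth_diag b.
Proof.
by move=> ab; rewrite /orth_diag; congr (_ *m diag_mx _ *m _); apply/rowP => j; rewrite !mxE.
Qed.

Lemma trmx_orth_diag a : (orth_diag a)^T = orth_diag a.
Proof. by rewrite /orth_diag !trmx_mul trmxK tr_diag_mx mulmxA. Qed.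

Lemma orth_diagM a b : orth_diag a *m orth_diag b = orth_diag (fun j => a j * b j).
Proof.
rewrite /orth_diag !mulmxA -[_ *m O^T *m O]mulmxA oO mulmx1.
rewrite -[_ *m diag_mx _ *m diag_mx _]mulmxA mulmx_diag; congr (_ *m _ *m _).
by congr diag_mx; apply/rowP => j; rewrite !mxE.
Qed.

Lemma orth_diag1 : orth_diag (fun=> 1) = 1%:M.
Proof.
rewrite /orth_diag; have -> : diag_mx (\row_j (1 : R)) = 1%:M :> 'M[R]_n.
  by apply/matrixP => i j; rewrite !mxE.
by rewrite mulmx1 (mulmx1C oO).
Qed.

Lemma vdot_orth_diag_ge s a x : (forall j, s <= a j) ->
  s * vdot x x <= vdot x (orth_diag a *m x).
Proof.
move=> sa; set y := O^T *m x.
have -> : vdot x x = vdot y y by rewrite vdot_mulmxl trmxK mulmxA (mulmx1C oO) mul1mx.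
rewrite /orth_diag -!mulmxA vdotC vdot_mulmxl vdotC -/y !vdotE mulr_sumr.
apply: ler_sum => i _; rewrite mul_diag_mx !mxE; set t := \sum_j _.
by have := sa i; have := sqr_ge0 t; nra.
Qed.

End OrthogonalDiagonal.

Lemma gram_orth_diag (R : realType) m (S : 'M[R]_m) s :
  (forall x, s * vnorm x <= vnorm (S *m x)) -> 0 <= s ->
  exists O d, [/\ orthonormal_cols O, S^T *m S = orth_diag O d & forall j, s ^+ 2 <= d j].
Proof.
move=> hS s0; have [O [oO /diag_mxP [d dE]]] : exists O : 'M[R]_m,
    orthonormal_cols O /\ is_diag_mx (O^T *m (S^T *m S) *m O).
  by apply: symmetric_orthogonal_diag; rewrite trmx_mul trmxK.
exists O, (fun j => d 0 j); split => // [|j].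
  rewrite /orth_diag; have -> : \row_j d 0 j = d by apply/rowP => j; rewrite mxE.
  by rewrite -dE !mulmxA (mulmx1C oO) mul1mx -mulmxA (mulmx1C oO) mulmx1.
(* d j is the squared length of S applied to the unit vector O e_j. *)
pose u : 'cV[R]_m := O *m delta_mx j 0.
have u1 : vnorm u = 1.
  by rewrite vnorm_orthonormal // vnormE /vdot trmx_delta -rowE !mxE !eqxx sqrtr1.
have : d 0 j = vdot (S *m u) (S *m u).
  move/matrixP: dE => /(_ j j); rewrite [RHS]mxE eqxx mulr1n => <-.
  rewrite !vdot_mulmxl.
  have -> : O^T *m (S^T *m (S *m u)) = O^T *m (S^T *m S) *m O *m delta_mx j 0.
    by rewrite /u !mulmxA.
  by rewrite /vdot trmx_delta -rowE -colE !mxE.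
move=> ->; rewrite -vnorm_sqr lerXn2r ?nnegrE ?vnorm_ge0 //.
by have := hS u; rewrite u1 mulr1.
Qed.

Lemma polar_decomposition (R : realType) m (S : 'M[R]_m) s : 0 < s ->
  (forall x, s * vnorm x <= vnorm (S *m x)) ->
  exists W : 'M[R]_m, [/\ orthonormal_cols W, orthonormal_cols W^T &
    forall x, s * vdot x x <= vdot x (W^T *m S *m x)].
Proof.
move=> s_gt0 hS; have [O [d [oO SS ds]]] := gram_orth_diag hS (ltW s_gt0).
pose r j := Num.sqrt (d j).
have r_ge_s j : s <= r j.
  by rewrite /r -(ger0_norm (ltW s_gt0)) -sqrtr_sqr ler_sqrt ?ds // (le_trans _ (ds j)) ?sqr_ge0.
have r_neq0 j : r j != 0 by rewrite gt_eqF // (lt_le_trans s_gt0).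
have rr j : r j * r j = d j by rewrite /r -expr2 sqr_sqrtr // (le_trans _ (ds j)) ?sqr_ge0.
(* W := S H^-1 with H := (S^T S)^(1/2), so that W^T S = H. *)
set W := S *m orth_diag O (fun j => (r j)^-1).
have WtS : W^T *m S = orth_diag O r.
  rewrite /W trmx_mul trmx_orth_diag -mulmxA SS orth_diagM //.
  by apply: eq_orth_diag => j; rewrite -rr mulrA mulVf ?mul1r.
have oW : orthonormal_cols W.
  rewrite /orthonormal_cols mulmxA WtS /W orth_diagM // -(orth_diag1 oO).
  by apply: eq_orth_diag => j; rewrite divff.
exists W; split => //; first by rewrite /orthonormal_cols trmxK (mulmx1C oW).
by move=> x; rewrite WtS; apply: vdot_orth_diag_ge.
Qed.

Section LinearCombinations.
Variables (R : realType) (n : nat).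

Definition lin_comb (S : set 'cV[R]_n) (x : 'cV[R]_n) := exists l : seq (R * 'cV[R]_n),
  (forall p, p \in l -> S p.2) /\ x = \sum_(p <- l) p.1 *: p.2.

Lemma in_spanP (S : set 'cV[R]_n) x : in_span S x <-> lin_comb S x.
Proof.
split=> [[s [c [sS ->]]]|[l [lS ->]]].
  exists [seq (c`_i, s`_i) | i <- iota 0 (size s)]; split.
    move=> p; case/mapP=> i; rewrite mem_iota => /andP [_ lt_i] -> /=.
    exact/sS/mem_nth.
  by rewrite big_map -(subn0 (size s)) big_mkord subn0.
exists (map snd l), (map fst l); split; first by move=> v; case/mapP=> p /lS ? ->.
rewrite (big_nth (0, 0)) size_map big_mkord; apply: eq_bigr => i _.
by rewrite !(nth_map (0, 0)).
Qed.

Lemma lin_comb0 (S : set 'cV[R]_n) : lin_comb S 0.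
Proof. by exists [::]; rewrite big_nil. Qed.

Lemma lin_combD (S : set 'cV[R]_n) x y : lin_comb S x -> lin_comb S y -> lin_comb S (x + y).
Proof.
move=> [l1 [l1S ->]] [l2 [l2S ->]]; exists (l1 ++ l2); rewrite big_cat.
by split=> // p; rewrite mem_cat => /orP[/l1S|/l2S].
Qed.

Lemma lin_combZ (S : set 'cV[R]_n) a x : lin_comb S x -> lin_comb S (a *: x).
Proof.
move=> [l [lS ->]]; exists [seq (a * p.1, p.2) | p <- l]; split.
  by move=> q; case/mapP=> p /lS ? ->.
by rewrite big_map scaler_sumr; apply: eq_bigr => p _; rewrite scalerA.
Qed.

Lemma lin_comb_gen (S : set 'cV[R]_n) x : S x -> lin_comb S x.
Proof.
move=> Sx; exists [:: (1, x)]; rewrite big_seq1 scale1r.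
by split=> // p; rewrite inE => /eqP ->.
Qed.

Lemma lin_comb_mulmx (S : set 'cV[R]_n) (A : 'M[R]_n) x :
  (forall g, S g -> lin_comb S (A *m g)) -> lin_comb S x -> lin_comb S (A *m x).
Proof.
move=> AS [l [lS ->]]; rewrite mulmx_sumr big_seq.
apply: big_ind => [|u v|p /lS /AS]; [exact: lin_comb0 | exact: lin_combD |].
by rewrite -scalemxAr; apply: lin_combZ.
Qed.

End LinearCombinations.

(* The generators come in pairs (Re v, Im v) that A maps into their span. *)
Lemma eig_real_span_mulmx (R : realType) n (A : 'M[R]_n) lam (I : pred 'I_n) x :
  eig_real_span A lam I x -> eig_real_span A lam I (A *m x).
Proof.
move=> /in_spanP Ex; apply/in_spanP; apply: lin_comb_mulmx Ex.
move=> _ [i [v [Ii v_neq0 Av [->|->]]]].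
- rewrite -Re_mx_cplxM Av Re_mxZ -scaleNr.
  by apply: lin_combD; apply: lin_combZ; apply: lin_comb_gen; exists i, v; split; auto.
- rewrite -Im_mx_cplxM Av Im_mxZ.
  by apply: lin_combD; apply: lin_combZ; apply: lin_comb_gen; exists i, v; split; auto.
Qed.

Lemma mx_cV_ext (R : realType) p q (M N : 'M[R]_(p, q)) :
  (forall x : 'cV[R]_q, M *m x = N *m x) -> M = N.
Proof.
move=> MN; apply/matrixP => i j; move/matrixP: (MN (delta_mx j 0)) => /(_ i 0).
by rewrite -!colE !mxE.
Qed.

Lemma ker0_unitmx (R : realType) n (M : 'M[R]_n) :
  (forall x : 'cV[R]_n, M *m x = 0 -> x = 0) -> M \in unitmx.
Proof.
move=> ker0; rewrite -unitmx_tr -row_free_unit -kermx_eq0; apply/eqP/row_matrixP => i.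
rewrite row0; apply: trmx_inj; rewrite trmx0; apply: ker0.
have : row i (kermx M^T) *m M^T = 0 by rewrite -row_mul mulmx_ker row0.
by move/(congr1 trmx); rewrite trmx_mul trmxK trmx0.
Qed.

Lemma col_spans_orth_compl (R : realType) n k m (E : set 'cV[R]_n)
    (P1 : 'M[R]_(n, k)) (P2 : 'M[R]_(n, m)) :
  col_spans P1 E -> col_spans P2 (orth_compl E) -> P1^T *m P2 = 0.
Proof.
move=> cP1 cP2; apply/matrixP => i j.
have -> : (P1^T *m P2) i j =
    ((P1 *m delta_mx i (0 : 'I_1))^T *m (P2 *m delta_mx j (0 : 'I_1))) 0 0.
  by rewrite trmx_mul !mulmxA trmx_delta -rowE -row_mul -colE !mxE.
have EP1 : E (P1 *m delta_mx i 0) by apply/cP1; exists (delta_mx i 0).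
have /(_ _ EP1) -> : orth_compl E (P2 *m delta_mx j 0) by apply/cP2; exists (delta_mx j 0).
by rewrite !mxE.
Qed.

Lemma col_spans_mulmx (R : realType) n m (E : set 'cV[R]_n)
    (P : 'M[R]_(n, m)) (W : 'M[R]_m) :
  col_spans P E -> orthonormal_cols W^T -> col_spans (P *m W) E.
Proof.
move=> cP oWt x; rewrite -cP; split=> -[y ->]; first by exists (W *m y); rewrite mulmxA.
have WWt : W *m W^T = 1%:M by move: oWt; rewrite /orthonormal_cols trmxK.
by exists (W^T *m y); rewrite -mulmxA (mulmxA W) WWt mul1mx.
Qed.

Definition aligned_bases (R : realType) n k m (xi : R)
    (P1 : 'M[R]_(n, k)) (P2 Q2 : 'M[R]_(n, m)) :=
  [/\ orthonormal_cols P1, orthonormal_cols P2, orthonormal_cols Q2,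
      P1^T *m P2 = 0 & forall y, (1 - xi) * vdot y y <= vdot y (P2^T *m Q2 *m y)].

Section AlignedBases.
Variables (R : realType) (k m : nat) (xi : R).
Variables (P1 : 'M[R]_(k + m, k)) (P2 Q2 : 'M[R]_(k + m, m)).
Hypotheses (xi_gt0 : 0 < xi) (xi_lt1 : xi < 1).
Hypothesis aligned : aligned_bases xi P1 P2 Q2.

Let oP1 : orthonormal_cols P1. Proof. by case: aligned. Qed.
Let oP2 : orthonormal_cols P2. Proof. by case: aligned. Qed.
Let oQ2 : orthonormal_cols Q2. Proof. by case: aligned. Qed.
Let P1tP2 : P1^T *m P2 = 0. Proof. by case: aligned. Qed.
Let P2tQ2_ge y : (1 - xi) * vdot y y <= vdot y (P2^T *m Q2 *m y).
Proof. by case: aligned. Qed.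

Let P2tP1 : P2^T *m P1 = 0.
Proof. by rewrite -[P1]trmxK -trmx_mul P1tP2 trmx0. Qed.

Let subxi_gt0 : 0 < 1 - xi. Proof. by rewrite subr_gt0. Qed.

Lemma P2tQ2_vnorm_ge y : (1 - xi) * vnorm y <= vnorm (P2^T *m Q2 *m y).
Proof.
have [->|y_neq0] := eqVneq y 0; first by rewrite mulmx0 vnorm0 mulr0.
rewrite -(ler_pM2l (vnorm_gt0 y_neq0)) mulrCA -expr2 vnorm_sqr.
apply: le_trans (P2tQ2_ge y) (le_trans (ler_norm _) (normr_vdot_le _ _)).
Qed.

Lemma P1P1t_add_P2P2t : P1 *m P1^T + P2 *m P2^T = 1%:M.
Proof.
have : orthonormal_cols (row_mx P1 P2).
  by rewrite /orthonormal_cols tr_row_mx mul_col_row oP1 oP2 P1tP2 P2tP1 -scalar_mx_block.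
by move/mulmx1C; rewrite tr_row_mx mul_row_col.
Qed.

Lemma vdot_split z :
  vdot z z = vdot (P1^T *m z) (P1^T *m z) + vdot (P2^T *m z) (P2^T *m z).
Proof. by rewrite !vdot_mulmxl !trmxK !mulmxA -vdotDr -mulmxDl P1P1t_add_P2P2t mul1mx. Qed.

Let sqrt2xi_sqr : Num.sqrt (2 * xi) ^+ 2 = 2 * xi.
Proof. by rewrite sqr_sqrtr // mulr_ge0 // ltW. Qed.

Lemma opbound_P1tQ2 : opbound (P1^T *m Q2) (Num.sqrt (2 * xi)).
Proof.
apply: opbound_sqr => [|y]; first exact: sqrtr_ge0.
have := vdot_split (Q2 *m y); rewrite -[LHS]vnorm_sqr vnorm_orthonormal // vnorm_sqr !mulmxA.
have : ((1 - xi) * vnorm y) ^+ 2 <= vnorm (P2^T *m Q2 *m y) ^+ 2.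
  by rewrite ler_sqr ?nnegrE ?mulr_ge0 ?vnorm_ge0 ?subr_ge0 ?(ltW xi_lt1) // P2tQ2_vnorm_ge.
rewrite exprMn !vnorm_sqr sqrt2xi_sqr; have := vdot_ge0 y; nra.
Qed.

Lemma opbound_P2_Q2 : opbound (P2 - Q2) (Num.sqrt (2 * xi)).
Proof.
apply: opbound_sqr => [|y]; first exact: sqrtr_ge0.
(* |P2 y - Q2 y|^2 = 2 |y|^2 - 2 y.(P2^T Q2 y) *)
rewrite mulmxBl !(vdotDl, vdotDr, vdotNl, vdotNr) opprK (vdotC (Q2 *m y)).
rewrite -!vnorm_sqr !vnorm_orthonormal // vnorm_sqr vdot_mulmxl mulmxA sqrt2xi_sqr.
by have := P2tQ2_ge y; nra.
Qed.

Lemma unitmx_row_P1Q2 : row_mx P1 Q2 \in unitmx.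
Proof.
apply: ker0_unitmx => y; rewrite -[y]vsubmxK mul_row_col => y0.
have Hd0 : P2^T *m Q2 *m dsubmx y = 0.
  by move/(congr1 (mulmx P2^T)): y0; rewrite mulmx0 mulmxDr !mulmxA P2tP1 mul0mx add0r.
have d0 : dsubmx y = 0.
  apply: vnorm_eq0; have := P2tQ2_vnorm_ge (dsubmx y); rewrite Hd0 vnorm0.
  by have := vnorm_ge0 (dsubmx y); have := subxi_gt0; nra.
move: y0; rewrite d0 mulmx0 addr0 => y0.
have u0 : usubmx y = 0 by rewrite -[usubmx y]mul1mx -oP1 -mulmxA y0 mulmx0.
by rewrite u0 col_mx0.
Qed.

Local Notation Q := (row_mx P1 Q2).
Local Notation R1 := (usubmx (invmx Q)).
Local Notation R2 := (dsubmx (invmx Q)).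

Lemma P1R1_add_Q2R2 : P1 *m R1 + Q2 *m R2 = 1%:M.
Proof. by rewrite -mul_row_col vsubmxK mulmxV // unitmx_row_P1Q2. Qed.

Lemma R2Q2 : R2 *m Q2 = 1%:M.
Proof.
have QtQ := mulVmx unitmx_row_P1Q2.
rewrite -[invmx _]vsubmxK mul_col_row (scalar_mx_block k m) in QtQ.
by case/eq_block_mx: QtQ.
Qed.

Lemma opbound_R2 : opbound R2 (1 / (1 - xi)).
Proof.
(* P2^T Q2 R2 = P2^T (1 - P1 R1) = P2^T, and P2^T Q2 is bounded below by 1 - xi. *)
have HR2 : P2^T *m Q2 *m R2 = P2^T.
  rewrite -mulmxA -[Q2 *m R2](addKr (P1 *m R1)) P1R1_add_Q2R2.
  by rewrite mulmxDr mulmxN mulmxA P2tP1 mul0mx oppr0 add0r mulmx1.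
move=> x; rewrite div1r ler_pdivlMl //; apply: le_trans (P2tQ2_vnorm_ge _) _.
rewrite mulmxA HR2 -[vnorm x]mul1r; apply: opbound_trmx => //.
exact: opbound_orthonormal.
Qed.

Lemma P1t_sub_R1 : P1^T - R1 = P1^T *m Q2 *m R2.
Proof.
have := congr1 (mulmx P1^T) P1R1_add_Q2R2.
rewrite mulmxDr !mulmxA oP1 mul1mx mulmx1 => {1}<-.
by rewrite addrAC subrr add0r.
Qed.

Lemma opbound_P1t_sub_R1 : opbound (P1^T - R1) (Num.sqrt (2 * xi) / (1 - xi)).
Proof.
rewrite P1t_sub_R1 -div1r.
by apply: opboundM; [exact: sqrtr_ge0 | exact: opbound_P1tQ2 | exact: opbound_R2].
Qed.

Lemma opbound_R1 : opbound R1 (1 + Num.sqrt (2 * xi) / (1 - xi)).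
Proof.
have := opboundB (opbound_trmx ler01 (opbound_orthonormal oP1)) opbound_P1t_sub_R1.
by rewrite opprB addrC subrK.
Qed.

Variable A : 'M[R]_(k + m).
Hypothesis A_Q2 : forall y : 'cV[R]_m, exists z, A *m (Q2 *m y) = Q2 *m z.

Local Notation N2 := (drsubmx (invmx Q *m A *m Q)).

Lemma N2_R2AQ2 : N2 = R2 *m A *m Q2.
Proof. by rewrite -{1}[invmx _]vsubmxK mul_col_mx mul_col_row block_mxKdr. Qed.

Lemma AQ2_Q2N2 : A *m Q2 = Q2 *m N2.
Proof.
have Q2Q2tAQ2 : Q2 *m Q2^T *m (A *m Q2) = A *m Q2.
  apply: mx_cV_ext => x; rewrite -!mulmxA; have [z ->] := A_Q2 x.
  by rewrite (mulmxA Q2^T) oQ2 mul1mx.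
have N2E : N2 = Q2^T *m A *m Q2.
  by rewrite N2_R2AQ2 -mulmxA -Q2Q2tAQ2 !mulmxA R2Q2 mul1mx.
by rewrite N2E -Q2Q2tAQ2 !mulmxA.
Qed.

Lemma opbound_N2 : opbound N2 (1 / (1 - xi) * opnorm A).
Proof.
rewrite N2_R2AQ2 -[_ * opnorm A]mulr1.
apply: opboundM (opbound_orthonormal oQ2); first by rewrite mulr_ge0 ?opnorm_ge0 ?divr_ge0 ?ltW.
by apply: opboundM opbound_R2 (opbound_opnorm A); rewrite divr_ge0 ?ltW.
Qed.

Lemma Delta_decomposition :
  ursubmx ((row_mx P1 P2)^T *m A *m row_mx P1 P2) =
  P1^T *m Q2 *m N2 + P1^T *m A *m (P2 - Q2).
Proof.
rewrite tr_row_mx mul_col_mx mul_col_row block_mxKur.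
by rewrite -(mulmxA _ Q2) -AQ2_Q2N2 mulmxA mulmxBr addrC subrK.
Qed.

Lemma opbound_Delta :
  opbound (ursubmx ((row_mx P1 P2)^T *m A *m row_mx P1 P2))
    ((2 - xi) / (1 - xi) * Num.sqrt (2 * xi) * opnorm A).
Proof.
have -> : (2 - xi) / (1 - xi) * Num.sqrt (2 * xi) * opnorm A =
    Num.sqrt (2 * xi) * (1 / (1 - xi) * opnorm A) + 1 * opnorm A * Num.sqrt (2 * xi).
  by field; rewrite gt_eqF.
rewrite Delta_decomposition; apply: opboundD.
  by apply: opboundM opbound_P1tQ2 opbound_N2; exact: sqrtr_ge0.
apply: opboundM opbound_P2_Q2; first by rewrite mul1r opnorm_ge0.
exact: opboundM ler01 (opbound_trmx ler01 (opbound_orthonormal oP1)) (opbound_opnorm A).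
Qed.

End AlignedBases.

(* Rotating P2 by the orthogonal factor of the polar decomposition of
   P2^T Q2 makes P2^T Q2 positive definite. *)
Lemma xi_close_aligned (R : realType) n k m (E W : set 'cV[R]_n)
    (P1 : 'M[R]_(n, k)) (xi : R) :
  orthonormal_cols P1 -> col_spans P1 E -> xi < 1 -> xi_close m xi (orth_compl E) W ->
  exists P2 Q2 : 'M[R]_(n, m),
    [/\ aligned_bases xi P1 P2 Q2, col_spans P2 (orth_compl E), col_spans Q2 W
       & 1 - xi <= sigma_min (P2^T *m Q2)].
Proof.
move=> oP1 cP1 xi_lt1 [P2 [Q2 [oP2 cP2 oQ2 cQ2 sigma_gt]]].
have s_gt0 : 0 < sigma_min (P2^T *m Q2) by apply: le_lt_trans sigma_gt; rewrite subr_ge0 ltW.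
have [U [oU oUt posU]] := polar_decomposition s_gt0 (sigma_min_le (P2^T *m Q2)).
have HE : (P2 *m U)^T *m Q2 = U^T *m (P2^T *m Q2) by rewrite trmx_mul mulmxA.
exists (P2 *m U), Q2; split => //.
- split => //.
  + by rewrite /orthonormal_cols trmx_mul mulmxA -(mulmxA U^T) oP2 mulmx1 oU.
  + by rewrite mulmxA (col_spans_orth_compl cP1 cP2) mul0mx.
  + move=> y; rewrite HE; apply: le_trans (posU y).
    by rewrite ler_wpM2r ?vdot_ge0 // ltW.
- exact: col_spans_mulmx.
- by rewrite HE sigma_min_orthonormal_mull // ltW.
Qed.

Theorem mainTheorem5 (R : realType) (k m : nat) (A : 'M[R]_(k + m))
  (lam : 'I_(k + m) -> complex.complex R) (xi : R) (P1 : 'M[R]_(k + m, k)) :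
  spectral_assumption k A lam ->
  orthonormal_cols P1 -> col_spans P1 (E_u k A lam) ->
  0 < xi -> xi < 1 ->
  xi_close m xi (orth_compl (E_u k A lam)) (E_s k A lam) ->
  exists P2 Q2 : 'M[R]_(k + m, m),
    let P := row_mx P1 P2 in
    let M := P^T *m A *m P in
    let Delta := ursubmx M in
    let Q := row_mx P1 Q2 in
    let R1 := usubmx (invmx Q) : 'M[R]_(k, k + m) in
    let R2 := dsubmx (invmx Q) : 'M[R]_(m, k + m) in
    let N2 := drsubmx (invmx Q *m A *m Q) in
    [/\ orthonormal_cols P2, col_spans P2 (orth_compl (E_u k A lam)),
        orthonormal_cols Q2, col_spans Q2 (E_s k A lam) & Q \in unitmx] /\
    [/\ 1 - xi <= sigma_min (P2^T *m Q2),
        opnorm (P1^T *m Q2) <= Num.sqrt (2 * xi) &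
        opnorm (P2 - Q2) <= Num.sqrt (2 * xi)] /\
    (opnorm R2 <= 1 / (1 - xi) /\ opnorm N2 <= 1 / (1 - xi) * opnorm A) /\
    (opnorm (P1^T - R1) <= Num.sqrt (2 * xi) / (1 - xi) /\
     opnorm R1 <= 1 + Num.sqrt (2 * xi) / (1 - xi)) /\
    opnorm Delta <= (2 - xi) / (1 - xi) * Num.sqrt (2 * xi) * opnorm A.
Proof.
move=> _ oP1 cP1 xi_gt0 xi_lt1 /(xi_close_aligned oP1 cP1 xi_lt1).
move=> [P2 [Q2 [aligned cP2 cQ2 sigma_ge]]].
have A_Q2 (y : 'cV[R]_m) : exists z, A *m (Q2 *m y) = Q2 *m z.
  by apply: (cQ2 _).2; apply: eig_real_span_mulmx; apply: (cQ2 _).1; exists y.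
have s0 : 0 <= Num.sqrt (2 * xi) := sqrtr_ge0 _.
have xi1 : 0 <= 1 - xi by rewrite subr_ge0 ltW.
have inv0 := divr_ge0 ler01 xi1.
have sinv0 := divr_ge0 s0 xi1.
have nA := opnorm_ge0 A.
exists P2, Q2 => P M Delta Q R1 R2 N2.
have [_ oP2 oQ2 _ _] := aligned.
split; first by split=> //; apply: (unitmx_row_P1Q2 xi_lt1 aligned).
split; first split=> //.
- exact: opnorm_le s0 (opbound_P1tQ2 xi_gt0 xi_lt1 aligned).
- exact: opnorm_le s0 (opbound_P2_Q2 xi_gt0 aligned).
split; first split.
- exact: opnorm_le inv0 (opbound_R2 xi_lt1 aligned).
- exact: opnorm_le (mulr_ge0 inv0 nA) (opbound_N2 xi_lt1 aligned A).
split; first split.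
- exact: opnorm_le sinv0 (opbound_P1t_sub_R1 xi_gt0 xi_lt1 aligned).
- exact: opnorm_le (addr_ge0 ler01 sinv0) (opbound_R1 xi_gt0 xi_lt1 aligned).
apply: opnorm_le (opbound_Delta xi_gt0 xi_lt1 aligned A_Q2).
by rewrite !mulr_ge0 ?invr_ge0 //; lra.
Qed.
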